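(* Let $\sigma$ be a fixed permutation of $[k]$. The probability that a uniformly random involution of $[n]$ contains $\sigma$ as a subsequence is $1/k!+o(1)$ as $n\to\infty$.
   Context: $[n]=\{1,\dots,n\}$. An involution of $[n]$ is a permutation $\phi$ with $\phi^2$ the identity. A permutation $\phi$ of $[n]$ ($n\ge k$) contains the permutation $\sigma$ of $[k]$ as a subsequence if, in the word $\phi(1)\phi(2)\cdots\phi(n)$, the letters $1,\dots,k$ appear in the order $\sigma(1),\sigma(2),\dots,\sigma(k)$. *)

From HB Require Import structures.
From mathcomp Require Import all_boot all_order all_algebra all_fingroup.
From mathcomp Require Import all_classical all_reals all_analysis.
Set Implicit Arguments. Unset Strict Implicit. Unset Printing Implicit Defensive.
Import Order.TTheory GRing.Theory Num.Theory.

(* Convention: [n] = {1..n} is represented by 'I_n = {0..n-1}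
   (letter i+1 of the paper is i here). *)

Definition perm_word n (phi : 'S_n) : seq nat := [seq val (phi i) | i <- enum 'I_n].

(* phi contains sigma as a subsequence: the letters 1..k, read in order in the
   word of phi, are sigma(1),...,sigma(k). *)
Definition contains_pat k n (sigma : 'S_k) (phi : 'S_n) : bool :=
  [seq x <- perm_word phi | x < k] == perm_word sigma.

Definition is_involution n (phi : 'S_n) : bool := (phi * phi == 1)%g.

Definition inv_contain_prob (R : realType) k (sigma : 'S_k) (n : nat) : R :=
  (#|[set phi : 'S_n | is_involution phi && contains_pat sigma phi]|%:R /
   #|[set phi : 'S_n | is_involution phi]|%:R)%R.

From HB Require Import structures.
From mathcomp Require Import all_boot all_order all_algebra all_fingroup.
From mathcomp Require Import all_classical all_reals all_analysis.
Import Order.TTheory GRing.Theory Num.Theory numFieldNormedType.Exports.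
From mathcomp Require Import zify ring lra.
Set Implicit Arguments. Unset Strict Implicit. Unset Printing Implicit Defensive.

(* Call an involution low-to-high if it sends every letter < k to a letter >= k.
   Conjugating a low-to-high involution by a permutation pi of the letters < k
   (extended by the identity) gives again a low-to-high involution, whose
   pattern is sigma pi^-1 when that of the original one is sigma; hence all k!
   patterns are equally frequent among low-to-high involutions.  Every other
   involution sends some i < k to some j < k, and for each pair (i, j) these are
   at most as many as the involutions fixing a given point.  Since the number of
   fixed points has second moment at most n, Cauchy-Schwarz bounds its mean by
   sqrt n, so the involutions fixing a given point form a fraction at most
   1/sqrt n of all involutions, and the exceptional ones a fraction at most
   k^2/sqrt n. *)

Lemma card_set_sum (T : finType) (P : pred T) : #|[set x | P x]| = (\sum_x P x)%N.
Proof. by rewrite -sum1dep_card big_mkcond; apply: eq_bigr => x _; case: (P x). Qed.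

Lemma leq_card_maps_into (T U : finType) (f : T -> U) (A : {pred T}) (B : {pred U}) :
  {in A &, injective f} -> {in A, forall x, f x \in B} -> (#|A| <= #|B|)%N.
Proof.
move=> f_inj fAB; rewrite -(card_in_imset f_inj).
by apply/subset_leq_card/fintype.subsetP => _ /imsetP[x xA ->]; exact: fAB.
Qed.

Lemma sorted_rel_index (T : eqType) (r : rel T) (s : seq T) :
  transitive r -> irreflexive r -> sorted r s ->
  {in s &, forall x y, r x y = (index x s < index y s)%N}.
Proof.
move=> r_tr r_irr r_s x y xs ys.
case: ltngtP => [lt_xy | lt_yx | eq_xy].
- exact: (sorted_ltn_index r_tr r_s).
- apply/negbTE/negP => r_xy.
  by have := r_irr x; rewrite (r_tr _ _ _ r_xy (sorted_ltn_index r_tr r_s _ _ ys xs lt_yx)).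
- by rewrite (index_inj x xs ys eq_xy) r_irr.
Qed.

Section PermWord.
Variable n : nat.
Implicit Types phi : 'S_n.

Lemma mem_perm_word phi x : (x \in perm_word phi) = (x < n)%N.
Proof.
apply/mapP/idP => [[i _ ->]|x_lt_n]; first exact: ltn_ord.
by exists (phi^-1 (Ordinal x_lt_n))%g; rewrite ?mem_enum ?permKV.
Qed.

Lemma uniq_perm_word phi : uniq (perm_word phi).
Proof.
rewrite /perm_word (map_comp val phi) map_inj_uniq; last exact: val_inj.
by rewrite map_inj_uniq ?enum_uniq //; exact: perm_inj.
Qed.

Lemma index_perm_word phi (x : 'I_n) :
  index (val x) (perm_word phi) = val ((phi^-1)%g x).
Proof.
rewrite /perm_word (map_comp val phi) index_map; last exact: val_inj.
by rewrite -{1}(permKV phi x) index_map ?index_enum_ord //; exact: perm_inj.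
Qed.

Definition precedes phi : rel nat :=
  fun x y => (index x (perm_word phi) < index y (perm_word phi))%N.

Lemma precedesE phi (x y : 'I_n) :
  precedes phi x y = ((phi^-1)%g x < (phi^-1)%g y)%N.
Proof. by rewrite /precedes !index_perm_word. Qed.

Lemma sorted_perm_word phi : sorted (precedes phi) (perm_word phi).
Proof.
have : sorted ltn (map val (enum 'I_n)) by rewrite val_enum_ord iota_ltn_sorted.
by rewrite !sorted_map; apply: sub_sorted => a b; rewrite /= precedesE !permK.
Qed.

End PermWord.

Section Pattern.
Variables (k n : nat) (k_le_n : (k <= n)%N).
Implicit Types (sigma : 'S_k) (phi : 'S_n).

Lemma contains_patP sigma phi :
  reflect (forall x y : 'I_k, precedes phi x y = precedes sigma x y)
          (contains_pat sigma phi).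
Proof.
have prec_tr : transitive (precedes phi) by move=> y x z; exact: ltn_trans.
have prec_irr : irreflexive (precedes phi) by move=> x; exact: ltnn.
have low_word : [seq x <- perm_word phi | (x < k)%N] =i perm_word sigma.
  move=> x; rewrite mem_filter !mem_perm_word andb_idr // => /leq_trans; exact.
have sorted_low : sorted (precedes phi) [seq x <- perm_word phi | (x < k)%N].
  by apply: sorted_filter; [exact: prec_tr | exact: sorted_perm_word].
apply: (iffP eqP) => [word_eq x y | same_order].
  have in_word (z : 'I_k) : val z \in perm_word sigma by rewrite mem_perm_word ltn_ord.
  rewrite word_eq in sorted_low.
  exact: sorted_rel_index prec_tr prec_irr sorted_low _ _ (in_word x) (in_word y).
have all_low : all (fun x => x < k)%N (perm_word sigma).
  by apply/allP => x; rewrite mem_perm_word.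
have sorted_sigma : sorted (precedes phi) (perm_word sigma).
  apply: sub_in_sorted all_low (sorted_perm_word sigma) => x y x_lt_k y_lt_k.
  by rewrite -[x]/(val (Ordinal x_lt_k)) -[y]/(val (Ordinal y_lt_k)) same_order.
by rewrite (irr_sorted_eq prec_tr prec_irr sorted_low sorted_sigma low_word).
Qed.

Lemma contains_pat_inj sigma sigma' phi :
  contains_pat sigma phi -> contains_pat sigma' phi -> sigma = sigma'.
Proof.
move=> /eqP phi_sigma /eqP phi_sigma'.
have word_eq : perm_word sigma = perm_word sigma' by rewrite -phi_sigma -phi_sigma'.
apply: invg_inj; apply/permP => i; apply: val_inj.
by rewrite -!index_perm_word word_eq.
Qed.

Lemma exists_contains_pat phi : exists sigma, contains_pat sigma phi.
Proof.
pose s := [seq x <- perm_word phi | (x < k)%N].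
have s_iota : perm_eq s (iota 0 k).
  apply: uniq_perm; rewrite ?iota_uniq ?filter_uniq ?uniq_perm_word // => x.
  rewrite mem_filter mem_perm_word mem_iota /= andb_idr // => /leq_trans; exact.
have size_s : size s = k by rewrite (perm_size s_iota) size_iota.
have s_low (i : 'I_k) : (nth 0 s i < k)%N.
  have : nth 0 s i \in iota 0 k by rewrite -(perm_mem s_iota) mem_nth ?size_s.
  by rewrite mem_iota.
pose f (i : 'I_k) : 'I_k := Ordinal (s_low i).
have f_inj : injective f.
  move=> i j /(congr1 val) /eqP /=.
  rewrite nth_uniq ?size_s ?filter_uniq ?uniq_perm_word // => /eqP; exact: val_inj.
exists (perm f_inj); apply/eqP.
have -> : perm_word (perm f_inj) = [seq nth 0 s (val i) | i <- enum 'I_k].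
  by apply: eq_map => i; rewrite /= permE.
rewrite (map_comp (nth 0 s) val) val_enum_ord.
by have := mkseq_nth 0 s; rewrite size_s /mkseq => ->.
Qed.

End Pattern.

Section InvolutionBasics.
Variable n : nat.
Implicit Types phi : 'S_n.

Lemma involutionV phi : is_involution phi -> (phi^-1)%g = phi.
Proof. by move=> /eqP phi2; rewrite -[RHS]mul1g -(mulVg phi) -mulgA phi2 mulg1. Qed.

Lemma involutionK phi : is_involution phi -> involutive phi.
Proof. by move=> inv_phi x; rewrite -{1}(involutionV inv_phi) permK. Qed.

Lemma is_involution_conjg phi psi : is_involution (phi ^ psi)%g = is_involution phi.
Proof. by rewrite /is_involution -conjMg conjg_eq1. Qed.

Lemma is_involution_mul_tperm phi a b :
  is_involution phi -> (phi a == b) || (phi a == a) && (phi b == b) ->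
  is_involution (phi * tperm a b)%g.
Proof.
move=> inv_phi ab_stable.
have tperm_fix : (tperm a b ^ phi)%g = tperm a b.
  rewrite tpermJ; case/orP: ab_stable => [/eqP <- | /andP[/eqP -> /eqP ->]] //.
  by rewrite involutionK // tpermC.
have /commgP comm : ([~ tperm a b, phi] == 1)%g by apply/conjg_fixP.
apply/eqP; rewrite mulgA -(mulgA phi) comm mulgA (eqP inv_phi) mul1g.
exact: tperm2.
Qed.

End InvolutionBasics.

Section Relabel.
Variables (k n : nat) (k_le_n : (k <= n)%N).
Implicit Types (sigma pi : 'S_k) (phi : 'S_n).

Definition relabel_fun pi (x : 'I_n) : 'I_n :=
  if insub (val x) is Some y then widen_ord k_le_n (pi y) else x.

Lemma relabel_fun_inj pi : injective (relabel_fun pi).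
Proof.
move=> x y; rewrite /relabel_fun.
case: insubP => [x' _ x_val | x_high]; case: insubP => [y' _ y_val | y_high].
- move/(congr1 val) => /= /val_inj/perm_inj eq_xy.
  by apply: val_inj; rewrite -x_val -y_val eq_xy.
- by move=> eq_y; rewrite -eq_y /= ltn_ord in y_high.
- by move=> eq_x; rewrite eq_x /= ltn_ord in x_high.
- by [].
Qed.

Definition relabel pi : 'S_n := perm (@relabel_fun_inj pi).

Lemma relabel_widen pi (x : 'I_k) :
  relabel pi (widen_ord k_le_n x) = widen_ord k_le_n (pi x).
Proof. by rewrite permE /relabel_fun /= valK. Qed.

Lemma relabelV_high pi (x : 'I_n) : (k <= x)%N -> ((relabel pi)^-1)%g x = x.
Proof.
move=> x_high; have fix_x : relabel pi x = x.
  by rewrite permE /relabel_fun insubN // -leqNgt.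
by rewrite -{1}fix_x permK.
Qed.

Definition low_to_high phi := [forall i : 'I_n, (i < k)%N ==> (k <= phi i)%N].

Lemma low_to_high_widen phi (x : 'I_k) :
  low_to_high phi -> (k <= phi (widen_ord k_le_n x))%N.
Proof. by move=> /forallP/(_ (widen_ord k_le_n x)); rewrite /= ltn_ord. Qed.

Lemma relabel_conj_widen pi phi (x : 'I_k) : low_to_high phi ->
  (phi ^ (relabel pi)^-1)%g (widen_ord k_le_n x) = phi (widen_ord k_le_n (pi x)).
Proof.
by move=> low; rewrite conjgE invgK !permM relabel_widen relabelV_high ?low_to_high_widen.
Qed.

Lemma low_to_high_conj pi phi :
  low_to_high phi -> low_to_high (phi ^ (relabel pi)^-1)%g.
Proof.
move=> low; apply/forallP => i; apply/implyP => i_low.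
have -> : i = widen_ord k_le_n (Ordinal i_low) by exact: val_inj.
by rewrite relabel_conj_widen ?low_to_high_widen.
Qed.

Lemma precedes_low phi (x y : 'I_k) :
  precedes phi x y =
  ((phi^-1)%g (widen_ord k_le_n x) < (phi^-1)%g (widen_ord k_le_n y))%N.
Proof. exact: (precedesE phi (widen_ord k_le_n x) (widen_ord k_le_n y)). Qed.

Lemma contains_pat_conj pi sigma phi :
  is_involution phi -> low_to_high phi -> contains_pat sigma phi ->
  contains_pat (sigma * pi^-1)%g (phi ^ (relabel pi)^-1)%g.
Proof.
move=> inv_phi low /(contains_patP k_le_n) same_order.
apply/(contains_patP k_le_n) => x y.
have inv_conj : is_involution (phi ^ (relabel pi)^-1)%g by rewrite is_involution_conjg.
rewrite !precedes_low (involutionV inv_conj) !relabel_conj_widen // precedesE.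
move: (same_order (pi x) (pi y)).
by rewrite precedes_low !precedesE involutionV // invMg invgK !permM.
Qed.

Definition pattern_class sigma :=
  [set phi : 'S_n | [&& is_involution phi, low_to_high phi & contains_pat sigma phi]].

Lemma card_pattern_class_le sigma pi :
  (#|pattern_class sigma| <= #|pattern_class (sigma * pi^-1)%g|)%N.
Proof.
apply: (leq_card_maps_into (f := fun phi => phi ^ (relabel pi)^-1)%g).
  by move=> phi psi _ _; exact: conjg_inj.
move=> phi; rewrite !inE => /and3P[inv_phi low contains].
by rewrite is_involution_conjg inv_phi low_to_high_conj ?contains_pat_conj.
Qed.

Lemma card_pattern_class_eq sigma sigma' :
  #|pattern_class sigma| = #|pattern_class sigma'|.
Proof.
have relabel_to (s s' : 'S_k) : (s * (s'^-1 * s)^-1)%g = s'.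
  by rewrite invMg invgK mulgA mulgV mul1g.
apply/eqP; rewrite eqn_leq.
have := card_pattern_class_le sigma (sigma'^-1 * sigma)%g.
have := card_pattern_class_le sigma' (sigma^-1 * sigma')%g.
by rewrite !relabel_to => -> ->.
Qed.

Lemma card_low_to_high sigma :
  #|[set phi : 'S_n | is_involution phi && low_to_high phi]| =
  (k`! * #|pattern_class sigma|)%N.
Proof.
rewrite -card_Sn -sum_nat_const card_set_sum.
transitivity (\sum_phi \sum_(s : 'S_k)
                [&& is_involution phi, low_to_high phi & contains_pat s phi])%N.
  apply: eq_bigr => phi _.
  have [s0 phi_s0] := exists_contains_pat k_le_n phi.
  rewrite (bigD1 s0) //= phi_s0 !andbT big1 ?addn0 // => s s_ne_s0.
  case phi_s: (contains_pat s phi); rewrite ?andbF //.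
  by rewrite (contains_pat_inj phi_s phi_s0) eqxx in s_ne_s0.
rewrite exchange_big; apply: eq_bigr => s _.
by rewrite (card_pattern_class_eq sigma s) card_set_sum.
Qed.

End Relabel.

Lemma sqr_sum_le_seq (T : Type) (r : seq T) (F : T -> nat) :
  ((\sum_(i <- r) F i) ^ 2 <= size r * \sum_(i <- r) F i ^ 2)%N.
Proof.
elim: r => [|x r IH]; first by rewrite !big_nil.
have cross : (2 * F x * \sum_(i <- r) F i <= size r * F x ^ 2 + \sum_(i <- r) F i ^ 2)%N.
  rewrite -sum1_size big_distrr big_distrl -big_split /=; apply: leq_sum => i _.
  by rewrite mul1n -mulnA (leq_of_leqif (nat_Cauchy _ _)).
move: IH cross; rewrite !big_cons /=.
set S := (\sum_(i <- r) F i)%N; set Q := (\sum_(i <- r) F i ^ 2)%N.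
nia.
Qed.

Lemma sqr_sum_le (T : finType) (A : {pred T}) (F : T -> nat) :
  ((\sum_(i in A) F i) ^ 2 <= #|A| * \sum_(i in A) F i ^ 2)%N.
Proof. by rewrite -!big_enum cardE; exact: sqr_sum_le_seq. Qed.

Section FixedPoints.
Variable n : nat.
Implicit Types (phi : 'S_n) (i j : 'I_n).

Definition involutions := [set phi : 'S_n | is_involution phi].
Definition inv_mapping i j := [set phi : 'S_n | is_involution phi && (phi i == j)].
Definition fixpoints phi := [set x | phi x == x].

Lemma card_involutions_gt0 : (0 < #|involutions|)%N.
Proof. by apply/card_gt0P; exists 1%g; rewrite inE /is_involution mulg1. Qed.

Lemma card_inv_mapping_le i j : (#|inv_mapping i j| <= #|inv_mapping i i|)%N.
Proof.
apply: (leq_card_maps_into (f := fun phi => phi * tperm i j)%g).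
  by move=> phi psi _ _; exact: mulIg.
move=> phi; rewrite !inE => /andP[inv_phi /eqP phi_i].
by rewrite is_involution_mul_tperm ?phi_i ?eqxx //= permM phi_i tpermR.
Qed.

Lemma card_inv_fixing_le i j : (#|inv_mapping i i| <= #|inv_mapping j j|)%N.
Proof.
apply: (leq_card_maps_into (f := fun phi => phi ^ tperm i j)%g).
  by move=> phi psi _ _; exact: conjg_inj.
move=> phi; rewrite !inE is_involution_conjg => /andP[-> /eqP phi_i].
by rewrite /= conjgE tpermV !permM tpermR phi_i tpermL.
Qed.

Lemma sum_card_fixpoints :
  (\sum_(phi in involutions) #|fixpoints phi| = \sum_j #|inv_mapping j j|)%N.
Proof.
under [RHS]eq_bigr => j _ do rewrite card_set_sum.
rewrite exchange_big big_mkcond; apply: eq_bigr => phi _.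
rewrite inE card_set_sum; case: (is_involution phi) => //=.
by rewrite big1.
Qed.

Lemma sum_sqr_card_fixpoints :
  (\sum_(phi in involutions) #|fixpoints phi| ^ 2 <= n * #|involutions|)%N.
Proof.
pose fixed_pairs := [set x : 'S_n * ('I_n * 'I_n) |
  [&& is_involution x.1, x.1 x.2.1 == x.2.1 & x.1 x.2.2 == x.2.2]].
have -> : (\sum_(phi in involutions) #|fixpoints phi| ^ 2 = #|fixed_pairs|)%N.
  rewrite card_set_sum -(pair_bigA _ (fun phi ab => [&& is_involution phi,
    phi ab.1 == ab.1 & phi ab.2 == ab.2] : nat)) big_mkcond /=.
  apply: eq_bigr => phi _; rewrite inE; case: (is_involution phi) => /=; last by rewrite big1.
  by rewrite -mulnn -cardsX card_set_sum; apply: eq_bigr => -[a b]; rewrite !inE.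
rewrite mulnC -[n in (_ * n)%N]card_ord -cardsT -cardsX.
(* The image of (phi, (a, b)) remembers b as its value at a. *)
apply: (leq_card_maps_into (f := fun x => (x.1 * tperm x.2.1 x.2.2, x.2.1)%g)).
  move=> [phi [a b]] [psi [c d]]; rewrite !inE /= => /and3P[_ /eqP phi_a _].
  move=> /and3P[_ /eqP psi_c _] [eq_mul eq_ac]; subst c.
  have eq_bd : b = d.
    by have := congr1 (fun f : 'S_n => f a) eq_mul; rewrite /= !permM phi_a psi_c !tpermL.
  by subst d; rewrite (mulIg _ _ _ eq_mul).
move=> [phi [a b]]; rewrite !inE /= andbT => /and3P[inv_phi phi_a phi_b].
by rewrite is_involution_mul_tperm // phi_a phi_b orbT.
Qed.

Lemma card_inv_fixing_sq_le i :
  (n * #|inv_mapping i i| ^ 2 <= #|involutions| ^ 2)%N.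
Proof.
have [n0 | n_gt0] := posnP n; first by rewrite {1}n0.
set A := #|inv_mapping i i|; set N := #|involutions|.
have nA_le : (n * A <= \sum_(phi in involutions) #|fixpoints phi|)%N.
  rewrite sum_card_fixpoints -{1}(card_ord n) -sum_nat_const.
  by apply: leq_sum => j _; exact: card_inv_fixing_le.
have : ((n * A) ^ 2 <= n * N ^ 2)%N.
  apply: (@leq_trans ((\sum_(phi in involutions) #|fixpoints phi|) ^ 2)).
    by rewrite leq_sqr.
  apply: leq_trans (sqr_sum_le _ _) _.
  by rewrite -[N ^ 2]mulnn mulnCA leq_mul2l sum_sqr_card_fixpoints orbT.
by rewrite expnMn -mulnn -mulnA leq_pmul2l.
Qed.

End FixedPoints.

Section BadInvolutions.
Variables (k n : nat) (k_le_n : (k <= n)%N).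

Definition bad := [set phi : 'S_n | is_involution phi && ~~ low_to_high k phi].

Lemma card_involutions_split :
  #|involutions n| =
  (#|[set phi : 'S_n | is_involution phi && low_to_high k phi]| + #|bad|)%N.
Proof.
rewrite !card_set_sum -big_split; apply: eq_bigr => phi _.
by case: (is_involution phi); case: (low_to_high k phi).
Qed.

Lemma card_contains_bounds (sigma : 'S_k) :
  (#|pattern_class n sigma| <=
   #|[set phi : 'S_n | is_involution phi && contains_pat sigma phi]| <=
   #|pattern_class n sigma| + #|bad|)%N.
Proof.
rewrite !card_set_sum -big_split /=; apply/andP; split; apply: leq_sum => phi _;
by case: (is_involution phi); case: (low_to_high k phi); case: (contains_pat sigma phi).
Qed.

Lemma sum_low_const c : (\sum_(a < n | (a < k)%N) c = k * c)%N.
Proof. by rewrite -(big_ord_widen n (fun=> c) k_le_n) sum_nat_const card_ord. Qed.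

Lemma card_bad_le (i : 'I_n) : (#|bad| <= k ^ 2 * #|inv_mapping i i|)%N.
Proof.
apply: (@leq_trans (\sum_(a < n | (a < k)%N) \sum_(b < n | (b < k)%N) #|inv_mapping a b|)).
  under eq_bigr => a _ do under eq_bigr => b _ do rewrite card_set_sum.
  under eq_bigr => a _ do rewrite exchange_big.
  rewrite exchange_big card_set_sum; apply: leq_sum => phi _.
  case: (is_involution phi) => //=.
  case: (boolP (low_to_high k phi)) => //= /forallPn[a].
  rewrite negb_imply -ltnNge => /andP[a_low phi_a_low].
  by rewrite (bigD1 a) // (bigD1 (phi a)) //= eqxx -addnA leq_addr.
rewrite -mulnn -mulnA -!sum_low_const; apply: leq_sum => a _; apply: leq_sum => b _.
exact: leq_trans (card_inv_mapping_le a b) (card_inv_fixing_le a i).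
Qed.

Lemma card_bad_sq_le : (n * #|bad| ^ 2 <= k ^ 4 * #|involutions n| ^ 2)%N.
Proof.
have [n0 | n_gt0] := posnP n; first by rewrite {1}n0.
set A := #|inv_mapping (Ordinal n_gt0) (Ordinal n_gt0)|.
apply: (@leq_trans (n * (k ^ 2 * A) ^ 2)).
  by rewrite leq_mul2l leq_sqr card_bad_le orbT.
rewrite expnMn -expnM mulnCA leq_mul2l.
by rewrite card_inv_fixing_sq_le orbT.
Qed.

End BadInvolutions.

Local Open Scope classical_set_scope.
Local Open Scope ring_scope.

Lemma dist_inv_ratio_le (R : realFieldType) (r c C B : R) :
  1 <= r -> 0 <= B -> 0 < r * c + B -> c <= C <= c + B ->
  `|r^-1 - C / (r * c + B)| <= B / (r * c + B).
Proof.
move=> r_ge1 B_ge0 N_gt0 /andP[c_le_C C_le].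
have r_gt0 : 0 < r by apply: lt_le_trans r_ge1.
have -> : r^-1 - C / (r * c + B) = (B / r - (C - c)) / (r * c + B).
  by field; rewrite !gt_eqF.
rewrite normrM [`|_^-1|]gtr0_norm ?invr_gt0 // ler_wpM2r //; first by rewrite invr_ge0 ltW.
have B_r_ge0 : 0 <= B / r by rewrite divr_ge0 // ltW.
have B_r_le : B / r <= B by rewrite ler_pdivrMr // ler_peMr.
by rewrite ler_norml; apply/andP; split; lra.
Qed.

Lemma inv_contain_prob_dist_le (R : realType) k (sigma : 'S_k) n : (k <= n)%N ->
  `|(k`!%:R)^-1 - inv_contain_prob R sigma n| <=
  #|bad k n|%:R / #|involutions n|%:R.
Proof.
move=> k_le_n; rewrite /inv_contain_prob.
have N_eq : #|involutions n| = (k`! * #|pattern_class n sigma| + #|bad k n|)%N.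
  by rewrite (card_involutions_split k) (card_low_to_high k_le_n sigma).
have N_gt0 := card_involutions_gt0 n.
rewrite -/(involutions n) N_eq !natrD natrM.
apply: dist_inv_ratio_le; rewrite ?ler1n ?fact_gt0 -?natrM -?natrD ?ltr0n -?N_eq //.
by rewrite !ler_nat card_contains_bounds.
Qed.

Lemma bad_ratio_cvg0 (R : realType) k :
  (fun n => #|bad k n|%:R / #|involutions n|%:R : R) @ \oo --> 0.
Proof.
apply/cvgr0Pnorm_lt => eps eps_gt0.
near=> n.
have n_big : (k ^ 4)%:R / eps ^+ 2 < n%:R :> R by near: n; exact: nbhs_infty_gtr.
have N_gt0 := card_involutions_gt0 n.
set b := _ / _; have b_ge0 : 0 <= b by rewrite divr_ge0.
have n_gt0 : 0 < n%:R :> R by rewrite ltr0n; near: n; exact: nbhs_infty_gt.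
have nb_le : n%:R * b ^+ 2 <= (k ^ 4)%:R.
  rewrite expr_div_n mulrA ler_pdivrMr ?exprn_gt0 ?ltr0n //.
  rewrite -!natrX -!natrM ler_nat; apply: card_bad_sq_le.
  by near: n; exact: nbhs_infty_ge.
rewrite ger0_norm // -(ltr_pXn2r (_ : 0 < 2)%N) ?nnegrE ?(ltW eps_gt0) //.
rewrite -(ltr_pM2l n_gt0); apply: (le_lt_trans nb_le).
by rewrite -ltr_pdivrMr ?exprn_gt0.
Unshelve. all: by end_near.
Qed.

Unset Implicit Arguments.

Theorem lemma1 (R : realType) (k : nat) (sigma : 'S_k) :
  inv_contain_prob R sigma @ \oo --> (((k`!)%:R)^-1 : R).
Proof.
apply/cvgrPdist_le => eps eps_gt0.
have /cvgr0_norm_le small_bad := bad_ratio_cvg0 (R := R) k.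
near=> n.
apply: le_trans (inv_contain_prob_dist_le R sigma _) (le_trans (ler_norm _) _).
  by near: n; exact: nbhs_infty_ge.
by near: n; exact: small_bad eps_gt0.
Unshelve. all: by end_near.
Qed.
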